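(* Let $a,b$ be unitary matrices of the same size. If $b^{-1}a^2b=a^3$, then $ab^{-1}ab=b^{-1}aba$. *)

From mathcomp Require Import all_boot all_order all_algebra.
From mathcomp Require Export spectral.

(* A unitary matrix a is diagonalizable. Since a^2 and a^3 are conjugate, the
   squares of the eigenvalues of a are a permutation s of their cubes:
   d_i^2 = d_(s i)^3. Iterating N = #[s] times gives d_i^(2^N) = d_i^(3^N), so
   the (nonzero) eigenvalues are roots of unity of the odd order 3^N - 2^N,
   hence a^m = 1 for an odd m. Then a = (a^2)^k with k = (m+1)/2, so
   b^-1 a b = (b^-1 a^2 b)^k = a^(3k) commutes with a. *)

From mathcomp Require Import all_boot all_order all_algebra spectral.
From mathcomp Require Import fingroup perm.
Import GRing.Theory Num.Theory.
Local Open Scope ring_scope.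

Lemma conjrX (R : unitRingType) (b x : R) k : b \is a GRing.unit ->
  (b^-1 * x * b) ^+ k = b^-1 * x ^+ k * b.
Proof.
move=> bU; elim: k => [|k IHk]; first by rewrite !expr0 mulr1 mulVr.
by rewrite exprS IHk !mulrA mulrK // exprS mulrA.
Qed.

Lemma odd_order_expr_sqr (R : pzSemiRingType) (x : R) m :
  odd m -> x ^+ m = 1 -> (x ^+ 2) ^+ (m.+1)./2 = x.
Proof.
move=> oddm xm1; rewrite -exprM mul2n halfK /= oddm subn0.
by rewrite exprS xm1 mulr1.
Qed.

Lemma comm_conj_of_sqr_conj_cube {R : unitRingType} {a b : R} {m : nat} :
  b \is a GRing.unit -> b^-1 * a ^+ 2 * b = a ^+ 3 ->
  odd m -> a ^+ m = 1 -> GRing.comm a (b^-1 * a * b).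
Proof.
move=> bU conj23 oddm am1.
have -> : b^-1 * a * b = (a ^+ 3) ^+ (m.+1)./2.
  by rewrite -conj23 conjrX // odd_order_expr_sqr.
by apply/commrX/commrX/commr_refl.
Qed.

Lemma char_poly_conj (R : comUnitRingType) n (P A : 'M[R]_n) :
  P \in unitmx -> char_poly (invmx P *m A *m P) = char_poly A.
Proof.
move=> Pu; rewrite /char_poly /char_poly_mx.
have -> : 'X%:M - map_mx polyC (invmx P *m A *m P) =
    map_mx polyC (invmx P) *m ('X%:M - map_mx polyC A) *m map_mx polyC P.
  rewrite mulmxBr mulmxBl -!map_mxM; congr (_ - _).
  by rewrite scalar_mxC -mulmxA -map_mxM mulVmx // map_mx1 mulmx1.
rewrite !det_mulmx mulrAC -det_mulmx -map_mxM mulVmx //.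
by rewrite map_mx1 det1 mul1r.
Qed.

Lemma char_poly_diag (R : comNzRingType) n (d : 'rV[R]_n) :
  char_poly (diag_mx d) = \prod_i ('X - (d 0 i)%:P).
Proof.
rewrite char_poly_trig ?diag_mx_is_trig //.
by apply: eq_bigr => i _; rewrite mxE eqxx.
Qed.

Lemma diag_mx_expr (R : nzRingType) n (d : 'rV[R]_n.+1) k :
  diag_mx d ^+ k = diag_mx (\row_i d 0 i ^+ k).
Proof.
elim: k => [|k IHk].
  rewrite expr0 -[1]/(1%:M) -diag_const_mx; congr diag_mx.
  by apply/rowP => i; rewrite !mxE.
rewrite exprS IHk -mulmxE mulmx_diag; congr diag_mx.
by apply/rowP => i; rewrite !mxE exprS.
Qed.

Lemma perm_of_prod_XsubC_eq {F : fieldType} {n} (f g : 'I_n -> F) :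
    \prod_i ('X - (f i)%:P) = \prod_i ('X - (g i)%:P) ->
  exists s : 'S_n, forall i, f i = g (s i).
Proof.
move=> eq_prod; have /tuple_permP[s /val_inj fgs] :
    perm_eq [tuple f i | i < n] [tuple g i | i < n].
  by apply: prod_XsubC_eq; rewrite /= !big_map; move: eq_prod; rewrite -!big_enum.
by exists s => i; have := congr1 (fun t => tnth t i) fgs; rewrite !tnth_mktuple.
Qed.

Lemma iter_expr_perm {R : pzSemiRingType} {I : finType} {d : I -> R}
    {s : {perm I}} {p q : nat} :
    (forall i, d i ^+ p = d (s i) ^+ q) ->
  forall k i, d i ^+ (p ^ k) = d ((s ^+ k)%g i) ^+ (q ^ k).
Proof.
move=> dpq; elim=> [|k IHk] i; first by rewrite expg0 perm1 !expn0.
by rewrite expnSr exprM IHk -exprM mulnC exprM dpq expgSr permM -exprM mulnC expnSr.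
Qed.

Lemma odd_root1_of_sqr_perm_cube {R : idomainType} {I : finType} {d : I -> R}
    {s : {perm I}} :
    (forall i, d i != 0) -> (forall i, d i ^+ 2 = d (s i) ^+ 3) ->
  exists2 m, odd m & forall i, d i ^+ m = 1.
Proof.
move=> d_neq0 sqr_cube; pose N := #[s]%g.
have N_gt0 : (0 < N)%N := order_gt0 s.
have le23 : (2 ^ N <= 3 ^ N)%N by rewrite leq_exp2r.
exists (3 ^ N - 2 ^ N)%N => [|i].
  by rewrite oddB // !oddX /= orbT orbF addTb -lt0n.
apply: (mulIf (expf_neq0 (2 ^ N) (d_neq0 i))).
by rewrite mul1r -exprD subnK // (iter_expr_perm sqr_cube) expg_order perm1.
Qed.

Lemma diagonalizable_odd_order (F : fieldType) n (a : 'M[F]_n.+1) :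
    diagonalizable a -> a \in unitmx -> char_poly (a ^+ 2) = char_poly (a ^+ 3) ->
  exists2 m, odd m & a ^+ m = 1.
Proof.
case=> P Pu /(similar_diagLR Pu)[d]; rewrite conjVmx // => aE aU cp23.
have aXE k : a ^+ k = invmx P *m diag_mx (\row_i d 0 i ^+ k) *m P.
  by rewrite aE !mulmxE conjrX // diag_mx_expr.
have cpX k : char_poly (a ^+ k) = \prod_i ('X - (d 0 i ^+ k)%:P).
  by rewrite aXE char_poly_conj // char_poly_diag; under eq_bigr do rewrite mxE.
have [s sqr_cube] : exists s : 'S_n.+1, forall i, d 0 i ^+ 2 = d 0 (s i) ^+ 3.
  by apply: (perm_of_prod_XsubC_eq (fun i => d 0 i ^+ 2) (fun i => d 0 i ^+ 3));
     rewrite -!cpX.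
have d_neq0 i : d 0 i != 0.
  move: aU; rewrite aE !unitmx_mul => /andP[/andP[_]].
  rewrite unitmxE det_diag unitfE (bigD1 i) //= mulf_eq0 negb_or => /andP[] //.
have [m oddm dm1] := odd_root1_of_sqr_perm_cube d_neq0 sqr_cube.
exists m => //; rewrite aXE.
have -> : \row_i d 0 i ^+ m = const_mx 1 by apply/rowP => i; rewrite !mxE dm1.
by rewrite diag_const_mx mulmx1 mulVmx.
Qed.

Lemma unitarymx_normal (C : numClosedFieldType) n (a : 'M[C]_n) :
  a \is unitarymx -> a \is normalmx.
Proof.
move=> /[dup] aU /unitarymxP aaT1; apply/normalmxP.
by rewrite aaT1 -invmx_unitary // mulVmx // unitarymx_unit.
Qed.

Lemma normalmx_diagonalizable (C : numClosedFieldType) n (a : 'M[C]_n) :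
  a \is normalmx -> diagonalizable a.
Proof.
move=> /orthomx_spectralP aE; have Pu := spectral_unit a.
exists (spectralmx a) => //; apply/(similar_diagLR Pu).
by exists (spectral_diag a); rewrite conjVmx.
Qed.

Theorem corollary2p2 (C : numClosedFieldType) (n : nat) (a b : 'M[C]_n) :
  a \is unitarymx -> b \is unitarymx ->
  invmx b *m (a *m a) *m b = a *m a *m a ->
  a *m invmx b *m a *m b = invmx b *m a *m b *m a.
Proof.
case: n a b => [|n] a b aU bU; first by rewrite !flatmx0.
have bUnit := unitarymx_unit bU.
(* In the ring 'M_n.+1, [invmx b] is by definition [b^-1]. *)
rewrite !mulmxE -expr2 -exprSr => conj23.
have [m oddm am1] : exists2 m, odd m & a ^+ m = 1.
  apply: diagonalizable_odd_order.
  - exact/normalmx_diagonalizable/unitarymx_normal.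
  - exact: unitarymx_unit.
  - by rewrite -conj23 char_poly_conj.
have := comm_conj_of_sqr_conj_cube bUnit conj23 oddm am1.
by rewrite /GRing.comm !mulrA.
Qed.
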